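(* If $v\in\mathfrak{S}_n$ is boolean with Robinson–Schensted shape $\lambda$, then $\mathbf{a}(v)=\lambda_2(v)$.
   Context: A permutation is boolean if its reduced words (in the simple reflections $\sigma_i=(i,i+1)$) have no repeated letters. $\lambda_2(v)$ is the length of the second row of the shape $\lambda$ of the tableaux assigned to $v$ by the Robinson–Schensted correspondence (zero if absent). Lusztig's $\mathbf{a}$-function on $\mathfrak{S}_n$ is the unique function constant on two-sided Kazhdan–Lusztig cells (sets of permutations with equal Robinson–Schensted shape) with $\mathbf{a}(w)=\ell(w)$ whenever $w$ is the longest element of a parabolic subgroup. *)

From mathcomp Require Import all_boot all_fingroup.
Set Implicit Arguments. Unset Strict Implicit. Unset Printing Implicit Defensive.

(* Simple reflection sigma_i = (i, i+1) (0-based); letters with i.+1 >= n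
   are never used in words (see [valid_word]). *)
Definition sref (n i : nat) : 'S_n :=
  match (insub i : option 'I_n), (insub i.+1 : option 'I_n) with
  | Some a, Some b => tperm a b
  | _, _ => 1%g
  end.

Definition valid_word (n : nat) (s : seq nat) : bool := all (fun i => i.+1 < n) s.

Definition word_prod (n : nat) (s : seq nat) : 'S_n :=
  foldr (fun i p => (sref n i * p)%g) 1%g s.

Definition reduced_word (n : nat) (w : 'S_n) (s : seq nat) : Prop :=
  [/\ valid_word n s, word_prod n s = w &
      forall t, valid_word n t -> word_prod n t = w -> size s <= size t].

Definition has_length (n : nat) (w : 'S_n) (k : nat) : Prop :=
  exists s, reduced_word w s /\ size s = k.

Definition boolean_perm (n : nat) (w : 'S_n) : Prop :=
  forall s, reduced_word w s -> uniq s.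

Fixpoint bump_row (r : seq nat) (x : nat) : option nat * seq nat :=
  match r with
  | [::] => (None, [:: x])
  | y :: r' => if x < y then (Some y, x :: r')
               else let: (b, r'') := bump_row r' x in (b, y :: r'')
  end.

Fixpoint ins_tab (t : seq (seq nat)) (x : nat) : seq (seq nat) :=
  match t with
  | [::] => [:: [:: x]]
  | r :: t' => let: (b, r') := bump_row r x in
               match b with
               | None => r' :: t'
               | Some y => r' :: ins_tab t' y
               end
  end.

Definition rs_P (s : seq nat) : seq (seq nat) := foldl ins_tab [::] s.

Definition rs_shape (n : nat) (w : 'S_n) : seq nat :=
  map size (rs_P [seq val (w i) | i <- enum 'I_n]).

Definition lambda2 (n : nat) (w : 'S_n) : nat := nth 0 (rs_shape w) 1.

Definition parabolic (n : nat) (J : {set 'I_n}) : {group 'S_n} :=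
  <<[set sref n (val j) | j in J]>>%G.

Definition longest_in (n : nat) (G : {set 'S_n}) (w : 'S_n) : Prop :=
  w \in G /\ forall u ku kw, u \in G -> has_length u ku -> has_length w kw -> ku <= kw.

(* The defining properties of Lusztig's a-function on S_n: constant on
   two-sided cells (= sets of equal RS shape) and equal to the length on
   longest elements of parabolic subgroups. *)
Definition is_a_function (n : nat) (a : 'S_n -> nat) : Prop :=
  (forall u w : 'S_n, rs_shape u = rs_shape w -> a u = a w) /\
  (forall (J : {set 'I_n}) (w : 'S_n) (k : nat),
      longest_in (parabolic J) w -> has_length w k -> a w = k).

(* A reduced word of a boolean permutation [v] has distinct letters, so the
   one-line notation of [v] avoids the pattern 321: a word without the letter [i]
   keeps [{0, ..., i}] stable, which rules out both ways in which the first
   letter [s_i] of the word could create a 321.  Schensted insertion of a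
   321-avoiding sequence never bumps an entry out of the second row, so [v] has
   shape [(n - m, m)] with [m = lambda_2(v)].  The product [s_0 s_2 ... s_(2m-2)]
   of [m] commuting reflections has the same shape and is the longest element,
   of length [m], of the parabolic subgroup they generate; as [a] is constant on
   shapes, [a v = m]. *)

From mathcomp Require Import all_boot all_fingroup zify.
From Stdlib Require Import Classical Wf_nat.
Set Implicit Arguments. Unset Strict Implicit. Unset Printing Implicit Defensive.

Lemma srefE n i (x : 'I_n) : i.+1 < n ->
  sref n i x = (if x == i :> nat then i.+1 else if x == i.+1 :> nat then i else x) :> nat.
Proof.
move=> lt_i1n; have lt_in : i < n by apply: ltnW.
rewrite /sref (insubT (fun k => k < n) lt_in) (insubT (fun k => k < n) lt_i1n) /=.
case: tpermP => [->|->|neq_xi neq_xi1] /=; rewrite ?eqxx //.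
  by rewrite ifN //; apply/eqP; lia.
rewrite ifN; last by apply/eqP => eq_xi; apply: neq_xi; apply: val_inj.
by rewrite ifN //; apply/eqP => eq_xi1; apply: neq_xi1; apply: val_inj.
Qed.

Lemma sref_tperm n (a b : 'I_n) : b = a.+1 :> nat -> sref n a = tperm a b.
Proof.
move=> eq_b; have lt_a1n : a.+1 < n by rewrite -eq_b.
apply/permP => x; apply: val_inj => /=; rewrite srefE //.
case: tpermP => [->|->|neq_xa neq_xb]; rewrite ?eq_b ?eqxx //.
  by rewrite ifN //; apply/eqP; lia.
rewrite ifN; last by apply/eqP => eq_xa; apply: neq_xa; apply: val_inj.
by rewrite ifN //; apply/eqP => eq_xb; apply: neq_xb; apply: val_inj; rewrite /= eq_xb.
Qed.

Lemma word_prod_cat n s t : word_prod n (s ++ t) = (word_prod n s * word_prod n t)%g.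
Proof. by elim: s => [|i s IHs] /=; rewrite ?mul1g // IHs mulgA. Qed.

Lemma valid_word_cat n s t : valid_word n (s ++ t) = valid_word n s && valid_word n t.
Proof. exact: all_cat. Qed.

Lemma tperm_shift_word n (a : 'I_n) k (lt_akn : a + k.+1 < n) :
  exists t, valid_word n t /\ word_prod n t = tperm a (Ordinal lt_akn).
Proof.
elim: k lt_akn => [|k IHk] lt_akn.
  exists [:: nat_of_ord a]; rewrite /valid_word /= -addn1 lt_akn /= mulg1.
  by split=> //; apply: sref_tperm => /=; rewrite addn1.
have lt_cn : a + k.+1 < n by apply: ltn_trans lt_akn; rewrite ltn_add2l.
pose c := Ordinal lt_cn; pose b := Ordinal lt_akn.
have [t [valid_t word_t]] := IHk lt_cn.
have sref_c : sref n c = tperm c b by apply: sref_tperm; rewrite /= addnS.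
(* tperm a b is the conjugate of tperm a c by tperm c b *)
exists (nat_of_ord c :: t ++ [:: nat_of_ord c]); split.
  by rewrite /= valid_word_cat valid_t /valid_word /= andbT; lia.
rewrite /= word_prod_cat word_t /= mulg1 sref_c -[X in (X * _)%g]tpermV -conjgE.
by rewrite tpermJ tpermL tpermD // -(inj_eq val_inj) /=; lia.
Qed.

Lemma tperm_word n (a b : 'I_n) :
  exists t, valid_word n t /\ word_prod n t = tperm a b.
Proof.
wlog le_ab : a b / a <= b.
  by move=> W; case: (leqP a b) => [/W //|/ltnW /W]; rewrite tpermC.
have [->|neq_ab] := eqVneq a b; first by exists [::]; rewrite tperm1.
have lt_ab : a < b by rewrite ltn_neqAle le_ab (inj_eq val_inj) neq_ab.
have eq_b : b = a + (b - a).-1.+1 :> nat by lia.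
have lt_akn : a + (b - a).-1.+1 < n by rewrite -eq_b.
by rewrite (_ : b = Ordinal lt_akn); [apply: tperm_shift_word | apply: val_inj].
Qed.

Lemma word_prod_surj n (w : 'S_n) : exists t, valid_word n t /\ word_prod n t = w.
Proof.
have [ts -> _] := prod_tpermP w; elim: ts => [|[a b] ts [t [valid_t word_t]]].
  by exists [::]; rewrite big_nil.
have [s [valid_s word_s]] := tperm_word a b.
by exists (s ++ t); rewrite valid_word_cat valid_s valid_t word_prod_cat word_s word_t big_cons.
Qed.

Lemma reduced_word_exists n (w : 'S_n) : exists s, reduced_word w s.
Proof.
pose P k := exists t, [/\ valid_word n t, word_prod n t = w & size t = k].
have [t [valid_t word_t]] := word_prod_surj w.
have P_t : P (size t) by exists t.
have [k [[[s [valid_s word_s <-]] min_k] _]] :=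
  dec_inh_nat_subset_has_unique_least_element P (fun k => classic (P k))
    (ex_intro P _ P_t).
by exists s; split=> // t' valid_t' word_t'; apply/leP/min_k; exists t'.
Qed.

Lemma word_prod_le_notin n i s (x : 'I_n) : valid_word n s -> i \notin s ->
  (word_prod n s x <= i) = (x <= i).
Proof.
elim: s x => [|j s IHs] x /=; first by rewrite perm1.
move=> /andP [lt_j1n valid_s]; rewrite inE negb_or => /andP [neq_ij notin_s].
by rewrite permM IHs // srefE //; move: neq_ij; repeat case: ifP; lia.
Qed.

Lemma sref_lt n i (x y : 'I_n) : i.+1 < n -> x < y ->
  ~~ ((x == i :> nat) && (y == i.+1 :> nat)) -> sref n i x < sref n i y.
Proof. by move=> lt_i1n lt_xy; rewrite !srefE //; repeat case: ifP; lia. Qed.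

Lemma uniq_word_no321 n s (x y z : 'I_n) : valid_word n s -> uniq s ->
  x < y < z -> ~~ (word_prod n s z < word_prod n s y < word_prod n s x).
Proof.
elim: s x y z => [|i s IHs] x y z /=; first by rewrite !perm1; lia.
move=> /andP [lt_i1n valid_s] /andP [notin_s uniq_s] /andP [lt_xy lt_yz].
rewrite !permM.
have prefix (t : 'I_n) := word_prod_le_notin (sref n i t) valid_s notin_s.
have [/andP [/eqP eq_x /eqP eq_y]|not_xy] := boolP ((x == i :> nat) && (y == i.+1 :> nat)).
  (* [word_prod n s] keeps [{0, ..., i}] stable; [sref n i y = i] lies in it, [z] does not *)
  by have := prefix y; have := prefix z; rewrite !srefE // eq_y; repeat case: ifP; lia.
have [/andP [/eqP eq_y /eqP eq_z]|not_yz] := boolP ((y == i :> nat) && (z == i.+1 :> nat)).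
  by have := prefix x; have := prefix y; rewrite !srefE // eq_y; repeat case: ifP; lia.
by apply: IHs => //; rewrite !sref_lt.
Qed.

Definition no321 (u : seq nat) : Prop :=
  forall i j k, i < j < k -> k < size u -> ~~ (nth 0 u k < nth 0 u j < nth 0 u i).

Definition oneline n (w : 'S_n) : seq nat := [seq val (w i) | i <- enum 'I_n].

Lemma size_oneline n (w : 'S_n) : size (oneline w) = n.
Proof. by rewrite size_map size_enum_ord. Qed.

Lemma nth_oneline n (w : 'S_n) (i : 'I_n) : nth 0 (oneline w) i = w i.
Proof. by rewrite (nth_map i) ?size_enum_ord // nth_ord_enum. Qed.

Lemma uniq_word_oneline_no321 n s : valid_word n s -> uniq s ->
  no321 (oneline (word_prod n s)).
Proof.
move=> valid_s uniq_s i j k lt_ijk; rewrite size_oneline => lt_kn.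
have lt_in : i < n by lia.
have lt_jn : j < n by lia.
rewrite -[i]/(nat_of_ord (Ordinal lt_in)) -[j]/(nat_of_ord (Ordinal lt_jn)).
rewrite -[k]/(nat_of_ord (Ordinal lt_kn)) !nth_oneline.
exact: uniq_word_no321.
Qed.

Lemma boolean_oneline_no321 n (v : 'S_n) : boolean_perm v -> no321 (oneline v).
Proof.
move=> bool_v; have [s red_s] := reduced_word_exists v.
have [valid_s word_s _] := red_s.
by rewrite -word_s; apply: uniq_word_oneline_no321 => //; apply: bool_v.
Qed.

Definition has_inversion_ge (u : seq nat) (y : nat) : Prop :=
  exists i j, [/\ i < j < size u, y <= nth 0 u j & nth 0 u j < nth 0 u i].

Lemma no321_rcons u x : no321 (rcons u x) -> no321 u.
Proof.
move=> no321_ux i j k lt_ijk lt_ku; have := no321_ux i j k lt_ijk.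
have lt_ju : j < size u by lia.
have lt_iu : i < size u by lia.
by rewrite size_rcons !nth_rcons lt_ku lt_ju lt_iu; apply; lia.
Qed.

Lemma has_inversion_ge_rcons u x y :
  has_inversion_ge u y -> has_inversion_ge (rcons u x) y.
Proof.
move=> [i [j [lt_iju le_y lt_ji]]]; exists i, j.
have lt_ju : j < size u by lia.
have lt_iu : i < size u by lia.
by rewrite size_rcons !nth_rcons lt_ju lt_iu; split=> //; lia.
Qed.

Lemma has_inversion_ge_last u x y z :
  z \in u -> y <= x < z -> has_inversion_ge (rcons u x) y.
Proof.
move=> z_u /andP [le_yx lt_xz]; exists (index z u), (size u).
have lt_zu : index z u < size u by rewrite index_mem.
by rewrite size_rcons !nth_rcons lt_zu ltnn eqxx nth_index // ltnSn.
Qed.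

Lemma no321_inversion_le u x y :
  no321 (rcons u x) -> has_inversion_ge u y -> y <= x.
Proof.
move=> no321_ux [i [j [lt_iju le_y lt_ji]]]; rewrite leqNgt; apply/negP => lt_xy.
have lt_ju : j < size u by lia.
have lt_iu : i < size u by lia.
have := no321_ux i j (size u) lt_iju.
rewrite size_rcons ltnSn !nth_rcons ltnn eqxx lt_ju lt_iu => /(_ isT) /negP.
by apply; lia.
Qed.

Lemma bump_rowP r x :
  (all (leq^~ x) r /\ bump_row r x = (None, rcons r x)) \/
  (exists a y b, [/\ r = a ++ y :: b, all (leq^~ x) a, x < y &
                     bump_row r x = (Some y, a ++ x :: b)]).
Proof.
elim: r => [|z r IHr] /=; first by left.
case: ifP => lt_xz; first by right; exists [::], z, r.
case: IHr => [[le_rx ->]|[a [y [b [-> le_ax lt_xy ->]]]]].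
  by left; rewrite le_rx andbT leqNgt lt_xz.
by right; exists (z :: a), y, b; rewrite /= le_ax andbT leqNgt lt_xz.
Qed.

Lemma bump_row_append r x : all (leq^~ x) r -> bump_row r x = (None, rcons r x).
Proof.
case: (bump_rowP r x) => [[_ ->]|[a [y [b [-> _ lt_xy _]]]]] // /allP le_rx.
by have := le_rx y; rewrite mem_cat mem_head orbT leqNgt lt_xy => /(_ isT).
Qed.

Lemma bump_row_last r x y : all (leq^~ x) r -> x < y ->
  bump_row (rcons r y) x = (Some y, rcons r x).
Proof.
elim: r => [|z r IHr] /=; first by move=> _ ->.
by move=> /andP [le_zx le_rx] lt_xy; rewrite ltnNge le_zx /= IHr.
Qed.

Definition ins_two_rows (rows : seq nat * seq nat) (x : nat) : seq nat * seq nat :=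
  let: (r1, r2) := rows in
  match bump_row r1 x with
  | (None, r1') => (r1', r2)
  | (Some y, r1') => (r1', rcons r2 y)
  end.

Definition two_rows (r1 r2 : seq nat) : seq (seq nat) := [seq r <- [:: r1; r2] | r != [::]].

(* The count clause is column strictness; the inversion clause prevents an entry
   bumped out of [r1] from bumping anything out of [r2]. *)
Definition two_row_inv (u r1 r2 : seq nat) : Prop :=
  [/\ sorted leq r1, {subset r1 ++ r2 <= u},
      forall y z, y \in r1 -> z \in r2 -> y < z -> has_inversion_ge u y,
      forall t, count (leq^~ t) r2 <= count (ltn^~ t) r1 &
      size r1 + size r2 = size u].

Lemma count_all_size (p : pred nat) s : all p s -> count p s = size s.
Proof. by rewrite all_count => /eqP. Qed.

Lemma two_row_inv_size u r1 r2 : two_row_inv u r1 r2 -> size r2 <= size r1.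
Proof.
move=> [_ _ _ count_r12 _]; have := count_r12 (\max_(z <- r2) z).
rewrite count_all_size; last by apply/allP => z z_r2; apply: leq_bigmax_seq.
by move/leq_trans; apply; apply: count_size.
Qed.

Lemma two_row_inv_append u r1 r2 x : two_row_inv u r1 r2 -> all (leq^~ x) r1 ->
  two_row_inv (rcons u x) (rcons r1 x) r2.
Proof.
move=> [sorted_r1 sub_u inv_r12 count_r12 size_r12] le_r1x; split.
- by rewrite (sorted_pairwise leq_trans) -cats1 pairwise_cat allrel1r le_r1x
    -(sorted_pairwise leq_trans) sorted_r1.
- move=> z; rewrite mem_rcons inE mem_cat mem_rcons inE -orbA => /orP [-> //|z_r].
  by rewrite sub_u ?orbT // mem_cat.
- move=> y z; rewrite mem_rcons inE => /orP [/eqP -> z_r2 lt_xz|y_r1 z_r2 lt_yz].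
    by apply: (has_inversion_ge_last (z := z)); rewrite ?leqnn ?lt_xz ?sub_u // mem_cat z_r2 orbT.
  exact: has_inversion_ge_rcons (inv_r12 y z y_r1 z_r2 lt_yz).
- by move=> t; rewrite -cats1 count_cat; apply: leq_trans (count_r12 t) _; apply: leq_addr.
- by rewrite !size_rcons -size_r12.
Qed.

Lemma two_row_inv_bumped_ge u r1 r2 x y : two_row_inv u r1 r2 -> no321 (rcons u x) ->
  y \in r1 -> x < y -> all (leq^~ y) r2.
Proof.
move=> [_ _ inv_r12 _ _] no321_ux y_r1 lt_xy; apply/allP => z z_r2 /=.
rewrite leqNgt; apply/negP => lt_yz.
by have := no321_inversion_le no321_ux (inv_r12 y z y_r1 z_r2 lt_yz); rewrite leqNgt lt_xy.
Qed.

Lemma sorted_bump a y b x : sorted leq (a ++ y :: b) ->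
  all (leq^~ x) a -> x < y -> sorted leq (a ++ x :: b).
Proof.
rewrite !(sorted_pairwise leq_trans) !pairwise_cat !pairwise_cons !allrel_consr.
move=> /and3P [/andP [_ le_ab] pw_a /andP [le_yb pw_b]] le_ax lt_xy.
rewrite le_ax le_ab pw_a pw_b !andbT /=.
by apply: (sub_all _ le_yb) => z /=; apply: leq_trans (ltnW lt_xy).
Qed.

Lemma column_strict_bump a y b r2 x : sorted leq (a ++ y :: b) ->
  all (leq^~ x) a -> x < y -> all (leq^~ y) r2 ->
  (forall t, count (leq^~ t) r2 <= count (ltn^~ t) (a ++ y :: b)) ->
  forall t, count (leq^~ t) (rcons r2 y) <= count (ltn^~ t) (a ++ x :: b).
Proof.
rewrite (sorted_pairwise leq_trans) pairwise_cat pairwise_cons => /and3P [_ _ /andP [le_yb _]].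
move=> le_ax lt_xy le_r2y count_r12 t.
have lt_ay : all (ltn^~ y) a by apply: (sub_all _ le_ax) => z /= le_zx; lia.
have count_b : count (ltn^~ y) b = 0.
  apply/eqP; rewrite -leqn0 leqNgt -has_count.
  by apply/hasPn => z /(allP le_yb) /=; rewrite -leqNgt.
have size_r2 : size r2 <= size a.
  have := count_r12 y; rewrite count_cat /= ltnn count_b.
  by rewrite (count_all_size le_r2y) (count_all_size lt_ay); lia.
rewrite -cats1 !count_cat /= addn0; have := count_r12 t; rewrite count_cat /=.
case: (leqP y t) => [le_yt|lt_ty].
  have le_r2t : all (leq^~ t) r2 by apply: (sub_all _ le_r2y) => z /= le_zy; lia.
  have lt_at : all (ltn^~ t) a by apply: (sub_all _ le_ax) => z /= le_zx; lia.
  by rewrite (count_all_size le_r2t) (count_all_size lt_at) (_ : x < t) //; lia.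
have -> : (y < t) = false by apply/negbTE; rewrite -leqNgt ltnW.
lia.
Qed.

Lemma two_row_inv_bump u a y b r2 x : two_row_inv u (a ++ y :: b) r2 ->
  all (leq^~ x) a -> x < y -> all (leq^~ y) r2 ->
  two_row_inv (rcons u x) (a ++ x :: b) (rcons r2 y).
Proof.
move=> [sorted_r1 sub_u inv_r12 count_r12 size_r12] le_ax lt_xy le_r2y.
have r1_u z : z \in a ++ y :: b -> z \in u by move=> z_r1; rewrite sub_u // mem_cat z_r1.
have r2_u z : z \in rcons r2 y -> z \in u.
  rewrite mem_rcons inE => /orP [/eqP ->|z_r2]; first by rewrite r1_u // mem_cat mem_head orbT.
  by rewrite sub_u // mem_cat z_r2 orbT.
split; [exact: sorted_bump sorted_r1 le_ax lt_xy | | |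
        exact: column_strict_bump sorted_r1 le_ax lt_xy le_r2y count_r12 |].
- move=> z z_in; rewrite mem_rcons inE; apply/orP.
  have [->|neq_zx] := eqVneq z x; [by left|right; apply: sub_u].
  move: z_in; rewrite !(mem_cat, mem_rcons, inE) (negPf neq_zx) /=.
  by case: (z \in a); case: (z \in b); case: (z == y); case: (z \in r2).
- move=> v z; rewrite mem_cat inE => /or3P [v_a|/eqP ->|v_b] z_r2 lt_vz.
  + move: z_r2; rewrite mem_rcons inE => /orP [/eqP eq_zy|z_r2].
      apply: (has_inversion_ge_last (z := y)); first by rewrite r2_u // mem_rcons mem_head.
      by rewrite (allP le_ax).
    by apply/has_inversion_ge_rcons/(inv_r12 v z) => //; rewrite mem_cat v_a.
  + by apply: (has_inversion_ge_last (z := z)); rewrite ?r2_u ?leqnn.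
  + have le_yv : y <= v.
      move: sorted_r1; rewrite (sorted_pairwise leq_trans) pairwise_cat pairwise_cons.
      by move=> /and3P [_ _ /andP [/allP ->]].
    move: z_r2; rewrite mem_rcons inE => /orP [/eqP eq_zy|z_r2].
      by move: lt_vz; rewrite eq_zy; lia.
    by apply/has_inversion_ge_rcons/(inv_r12 v z) => //; rewrite mem_cat inE v_b !orbT.
- by move: size_r12; rewrite !size_rcons !size_cat /=; lia.
Qed.

Lemma ins_tab_two_rows_append r1 r2 x : size r2 <= size r1 ->
  bump_row r1 x = (None, rcons r1 x) -> ins_tab (two_rows r1 r2) x = two_rows (rcons r1 x) r2.
Proof.
case: r1 => [|y r1] /=; first by rewrite leqn0 => /nilP ->.
by case: r2 => [|z r2] /= _ ->.
Qed.

Lemma ins_tab_two_rows_bump a y b r2 x : all (leq^~ y) r2 ->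
  bump_row (a ++ y :: b) x = (Some y, a ++ x :: b) ->
  ins_tab (two_rows (a ++ y :: b) r2) x = two_rows (a ++ x :: b) (rcons r2 y).
Proof.
have nonnil c : (a ++ c :: b != [::]) = true by case: a.
move=> le_r2y bump_r1; rewrite /two_rows /= !nonnil /= bump_r1.
have [-> //|nonnil_r2] := eqVneq r2 [::].
by rewrite /= bump_row_append // ifT //; case: (r2).
Qed.

Lemma two_row_inv_ins u r1 r2 x : two_row_inv u r1 r2 -> no321 (rcons u x) ->
  let rows := ins_two_rows (r1, r2) x in
  two_row_inv (rcons u x) rows.1 rows.2 /\
  ins_tab (two_rows r1 r2) x = two_rows rows.1 rows.2.
Proof.
move=> inv_u no321_ux; rewrite /ins_two_rows.
case: (bump_rowP r1 x) => [[le_r1x bump_r1]|[a [y [b [def_r1 le_ax lt_xy bump_r1]]]]].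
  rewrite bump_r1; split; first exact: two_row_inv_append.
  exact: ins_tab_two_rows_append (two_row_inv_size inv_u) bump_r1.
have le_r2y : all (leq^~ y) r2.
  by apply: two_row_inv_bumped_ge inv_u no321_ux _ lt_xy; rewrite def_r1 mem_cat mem_head orbT.
subst r1; rewrite bump_r1; split; first exact: two_row_inv_bump.
exact: ins_tab_two_rows_bump.
Qed.

Definition rows_of (u : seq nat) : seq nat * seq nat := foldl ins_two_rows ([::], [::]) u.

Lemma rs_P_no321 u : no321 u ->
  two_row_inv u (rows_of u).1 (rows_of u).2 /\ rs_P u = two_rows (rows_of u).1 (rows_of u).2.
Proof.
elim/last_ind: u => [|u x IHu] no321_ux; first by split=> //; split.
rewrite /rows_of /rs_P !foldl_rcons -/(rows_of u) -/(rs_P u).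
have [inv_u ->] := IHu (no321_rcons no321_ux).
by case: (rows_of u) inv_u => r1 r2 inv_u; apply: two_row_inv_ins.
Qed.

Definition two_row_shape (n m : nat) : seq nat := [seq k <- [:: n - m; m] | k != 0].

Lemma nth_two_row_shape n m : m <= n - m -> nth 0 (two_row_shape n m) 1 = m.
Proof. by rewrite /two_row_shape; case: m => [|m] /=; case: (n - _) => [|k]. Qed.

Lemma map_size_two_rows r1 r2 :
  map size (two_rows r1 r2) = [seq k <- [:: size r1; size r2] | k != 0].
Proof. by case: r1 => [|? ?]; case: r2 => [|? ?]. Qed.

Lemma rs_shape_no321 n (w : 'S_n) : no321 (oneline w) ->
  let m := size (rows_of (oneline w)).2 in m <= n - m /\ rs_shape w = two_row_shape n m.
Proof.
move=> no321_w m; have [inv_w rs_P_w] := rs_P_no321 no321_w.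
have [_ _ _ _] := inv_w; rewrite size_oneline -/m => size_r12.
have := two_row_inv_size inv_w; rewrite -/m => size_r21.
have size_r1 : size (rows_of (oneline w)).1 = n - m by lia.
split; first by lia.
by rewrite /rs_shape -/(oneline w) rs_P_w map_size_two_rows size_r1.
Qed.

Definition mate (x : nat) : nat := if odd x then x.-1 else x.+1.

Lemma half_mate x : (mate x)./2 = x./2.
Proof. by rewrite /mate; case: ifP; lia. Qed.

Lemma mateK : involutive mate.
Proof. by move=> x; rewrite /mate; case: (boolP (odd x)) => odd_x; case: ifP; lia. Qed.

Lemma mate_ltn2 x m : (mate x < 2 * m) = (x < 2 * m).
Proof. by rewrite /mate; case: ifP => odd_x; apply/idP/idP; lia. Qed.

Lemma sref_pair n m (x : 'I_n) : (2 * m).+1 < n ->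
  sref n (2 * m) x = (if x./2 == m then mate x else x) :> nat.
Proof. by move=> lt_2m1_n; rewrite srefE // /mate; repeat case: ifP; lia. Qed.

Definition pair_word (P : pred nat) (m : nat) : seq nat := [seq 2 * j | j <- iota 0 m & P j].

Lemma pair_wordE n P m (x : 'I_n) : 2 * m <= n ->
  word_prod n (pair_word P m) x = (if (x < 2 * m) && P x./2 then mate x else x) :> nat.
Proof.
elim: m => [|m IHm] le_2m1_n; first by rewrite perm1.
rewrite /pair_word -[m.+1]addn1 iotaD filter_cat map_cat word_prod_cat permM.
rewrite -/(pair_word P m) /= add0n.
case: (boolP (P m)) => P_m /=; rewrite ?mulg1 ?perm1; last first.
  rewrite IHm; last by lia.
  by have [half_x|] := eqVneq x./2 m; [rewrite half_x (negbTE P_m) |]; repeat case: ifP; lia.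
rewrite sref_pair; last by lia.
rewrite IHm; last by lia.
rewrite (fun_if (fun y => y./2)) half_mate if_same.
have [half_x|neq_half_x] := eqVneq x./2 m.
  rewrite half_x P_m !andbT (fun_if mate) mateK ifF; last by lia.
  by rewrite ifT //; lia.
by repeat case: ifP; lia.
Qed.

Lemma pair_word_ext m P Q : {in gtn m, P =1 Q} -> pair_word P m = pair_word Q m.
Proof.
move=> eq_PQ; rewrite /pair_word; congr map; apply: eq_in_filter => j.
by rewrite mem_iota => /andP [_ lt_jm]; apply: eq_PQ.
Qed.

Lemma pair_word_mul n m P Q : 2 * m <= n ->
  (word_prod n (pair_word P m) * word_prod n (pair_word Q m))%g =
  word_prod n (pair_word (fun j => P j (+) Q j) m).
Proof.
move=> le_2m_n; apply/permP => x; apply: val_inj; rewrite permM /= !pair_wordE //.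
case lt_x: (x < 2 * m); last by rewrite lt_x.
case: (P x./2); rewrite ?mate_ltn2 ?half_mate lt_x;
  by case: (Q x./2); rewrite ?mateK.
Qed.

Lemma valid_pair_word n m P : 2 * m <= n -> valid_word n (pair_word P m).
Proof.
move=> le_2m_n; apply/allP => i /mapP [j]; rewrite mem_filter mem_iota => /and3P [_ _ lt_jm] ->.
by lia.
Qed.

Lemma uniq_pair_word m P : uniq (pair_word P m).
Proof. by rewrite map_inj_uniq ?filter_uniq ?iota_uniq // => i j; lia. Qed.

Lemma size_pair_word m P : size (pair_word P m) <= m.
Proof. by rewrite size_map size_filter -[X in _ <= X](size_iota 0 m) count_size. Qed.

Lemma size_pair_word_predT m : size (pair_word predT m) = m.
Proof. by rewrite size_map filter_predT size_iota. Qed.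

Definition ffun_pred m (f : {ffun 'I_m -> bool}) : pred nat :=
  fun j => if insub j is Some k then f k else false.

Lemma ffun_predE m (f : {ffun 'I_m -> bool}) j (lt_jm : j < m) :
  ffun_pred f j = f (Ordinal lt_jm).
Proof. by rewrite /ffun_pred insubT. Qed.

(* The subproducts of [pair_swap n m], indexed by finfuns to get a finite set:
   they form a group containing the parabolic subgroup generated by [s_0, s_2, ..., s_(2m-2)]. *)
Definition pair_products n m : {set 'S_n} :=
  [set word_prod n (pair_word (ffun_pred f) m) | f : {ffun 'I_m -> bool}].

Lemma group_set_pair_products n m : 2 * m <= n -> group_set (pair_products n m).
Proof.
move=> le_2m_n; apply/group_setP; split.
  apply/imsetP; exists [ffun=> false] => //.
  rewrite (@pair_word_ext _ _ pred0) /pair_word ?filter_pred0 // => j lt_jm.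
  by rewrite ffun_predE ffunE.
move=> _ _ /imsetP [f _ ->] /imsetP [g _ ->]; apply/imsetP; exists [ffun k => f k (+) g k] => //.
rewrite pair_word_mul //; congr word_prod; apply: pair_word_ext => j lt_jm.
by rewrite !ffun_predE ffunE.
Qed.

Definition even_letters n m : {set 'I_n} := [set j : 'I_n | (j < 2 * m) && ~~ odd j].

Lemma parabolic_sub_pair_products n m : 2 * m <= n ->
  parabolic (even_letters n m) \subset pair_products n m.
Proof.
move=> le_2m_n; rewrite (gen_subG _ (Group (group_set_pair_products le_2m_n))).
apply/subsetP => u /imsetP [j]; rewrite inE => /andP [lt_j2m even_j] ->.
apply/imsetP; exists [ffun k : 'I_m => k == j./2 :> nat] => //.
apply/permP => x; apply: val_inj; rewrite /= srefE ?pair_wordE //; last by lia.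
case: (ltnP x (2 * m)) => [lt_x2m|ge_x2m] /=; last by repeat case: ifP; lia.
have lt_half_x : x./2 < m by lia.
by rewrite ffun_predE ffunE /= /mate; repeat case: ifP; lia.
Qed.

Lemma word_prod_group n (G : {group 'S_n}) t :
  {in t, forall i, sref n i \in G} -> word_prod n t \in G.
Proof.
elim: t => [|i t IHt] sref_G /=; first exact: group1.
by rewrite groupM ?sref_G ?mem_head // IHt // => j j_t; rewrite sref_G // inE j_t orbT.
Qed.

Definition pair_swap n m : 'S_n := word_prod n (pair_word predT m).

Lemma pair_swap_parabolic n m : 2 * m <= n ->
  pair_swap n m \in parabolic (even_letters n m).
Proof.
move=> le_2m_n; apply: word_prod_group => i /mapP [j].
rewrite mem_filter mem_iota => /and3P [_ _ lt_jm] ->.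
have lt_2j_n : 2 * j < n by lia.
apply: mem_gen; apply/imsetP; exists (Ordinal lt_2j_n) => //.
by rewrite inE /=; apply/andP; split; lia.
Qed.

Lemma pair_word_sub n m t : 2 * m <= n -> valid_word n t ->
  word_prod n t = pair_swap n m -> {subset pair_word predT m <= t}.
Proof.
move=> le_2m_n valid_t word_t i /mapP [j]; rewrite mem_filter mem_iota => /and3P [_ _ lt_jm] ->.
have lt_2j_n : 2 * j < n by lia.
(* without the letter [2j], [{0, ..., 2j}] would be stable, but [2j] goes to [2j + 1] *)
apply/negPn/negP => notin_t; have := word_prod_le_notin (Ordinal lt_2j_n) valid_t notin_t.
by rewrite word_t pair_wordE //= andbT /mate; repeat case: ifP; lia.
Qed.

Lemma pair_swap_word_size n m t : 2 * m <= n -> valid_word n t ->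
  word_prod n t = pair_swap n m -> m <= size t.
Proof.
move=> le_2m_n valid_t word_t; rewrite -(size_pair_word_predT m).
exact: uniq_leq_size (uniq_pair_word _ _) (pair_word_sub le_2m_n valid_t word_t).
Qed.

Lemma pair_swap_length n m : 2 * m <= n -> has_length (pair_swap n m) m.
Proof.
move=> le_2m_n; exists (pair_word predT m); split; last exact: size_pair_word_predT.
split=> [|//|t valid_t word_t]; first exact: valid_pair_word.
by rewrite size_pair_word_predT; apply: pair_swap_word_size word_t.
Qed.

Lemma pair_swap_longest n m : 2 * m <= n ->
  longest_in (parabolic (even_letters n m)) (pair_swap n m).
Proof.
move=> le_2m_n; split=> [|u ku kw u_G [s [[_ _ min_s] <-]] [s' [[valid_s' word_s' _] <-]]].
  exact: pair_swap_parabolic.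
have /imsetP [f _ def_u] := subsetP (parabolic_sub_pair_products le_2m_n) u u_G.
apply: (@leq_trans m); last exact: pair_swap_word_size word_s'.
apply: leq_trans (size_pair_word m (ffun_pred f)).
by apply: min_s; [exact: valid_pair_word | rewrite def_u].
Qed.

Lemma oneline_pair_swap n m : 2 * m <= n ->
  oneline (pair_swap n m) = [seq if x < 2 * m then mate x else x | x <- iota 0 n].
Proof.
move=> le_2m_n; rewrite /oneline -val_enum_ord -map_comp; apply: eq_map => x /=.
by rewrite pair_wordE // andbT.
Qed.

Definition evens k : seq nat := [seq 2 * j | j <- iota 0 k].

Lemma evensS k : evens k.+1 = rcons (evens k) (2 * k).
Proof. by rewrite /evens -[k.+1]addn1 iotaD map_cat cats1. Qed.

(* On [1 0 3 2 ...] each odd entry is appended to the first row, then bumped into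
   the second row by its even mate. *)
Lemma rows_of_pairs m k : k <= m ->
  rows_of [seq if x < 2 * m then mate x else x | x <- iota 0 (2 * k)] = (evens k, map S (evens k)).
Proof.
elim: k => [|k IHk] le_km //; rewrite evensS map_rcons /rows_of.
rewrite (_ : 2 * k.+1 = 2 * k + 2); last by lia.
rewrite (iotaD 0 (2 * k) 2) map_cat foldl_cat -/(rows_of _) IHk; last by lia.
have le_evens y : 2 * k <= y -> all (leq^~ y) (evens k).
  by move=> le_2k_y; apply/allP => z /mapP [j]; rewrite mem_iota => /andP [_ lt_jk] ->; lia.
have mate_2k : mate (2 * k) = (2 * k).+1 by rewrite /mate; case: ifP; lia.
have mate_2k1 : mate (2 * k).+1 = 2 * k by rewrite /mate; case: ifP; lia.
rewrite /= add0n !ifT; try lia.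
by rewrite mate_2k mate_2k1 bump_row_append ?le_evens //= bump_row_last ?le_evens.
Qed.

Lemma foldl_ins_two_rows_iota r1 r2 s c : all (ltn^~ s) r1 ->
  foldl ins_two_rows (r1, r2) (iota s c) = (r1 ++ iota s c, r2).
Proof.
elim: c r1 s => [|c IHc] r1 s lt_r1s /=; first by rewrite cats0.
rewrite bump_row_append; last by apply: (sub_all _ lt_r1s) => z /ltnW.
rewrite IHc ?cat_rcons // all_rcons /= ltnSn.
by apply: (sub_all _ lt_r1s) => z /= /ltnW.
Qed.

Lemma rs_shape_pair_swap n m : 2 * m <= n -> rs_shape (pair_swap n m) = two_row_shape n m.
Proof.
move=> le_2m_n.
have no321_w := uniq_word_oneline_no321 (valid_pair_word predT le_2m_n) (uniq_pair_word m predT).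
have [_ ->] := rs_shape_no321 no321_w; congr two_row_shape.
rewrite oneline_pair_swap // -[n](subnKC le_2m_n) iotaD map_cat /rows_of foldl_cat.
have fixed : [seq if x < 2 * m then mate x else x | x <- iota (2 * m) (n - 2 * m)] =
              iota (2 * m) (n - 2 * m).
  by rewrite -[RHS]map_id; apply/eq_in_map => x; rewrite mem_iota => /andP [/leq_gtF ->].
rewrite -/(rows_of _) rows_of_pairs // add0n fixed.
rewrite foldl_ins_two_rows_iota /= ?size_map ?size_iota //.
by apply/allP => z /mapP [j]; rewrite mem_iota => /andP [_ lt_jm] ->; lia.
Qed.

Theorem corollary6p6 (n : nat) (a : 'S_n -> nat) :
  is_a_function a -> forall v : 'S_n, boolean_perm v -> a v = lambda2 v.
Proof.
move=> [a_shape a_longest] v bool_v.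
have [le_m shape_v] := rs_shape_no321 (boolean_oneline_no321 bool_v).
set m := size _ in le_m shape_v.
have le_2m_n : 2 * m <= n by lia.
have -> : lambda2 v = m by rewrite /lambda2 shape_v nth_two_row_shape.
rewrite (a_shape v (pair_swap n m)); last by rewrite shape_v rs_shape_pair_swap.
exact: a_longest (pair_swap_longest le_2m_n) (pair_swap_length le_2m_n).
Qed.
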